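(* Let $A$ and $B$ be isoclinic finite groups. If $A$ is weakly-top, then $B$ is weakly-top. If $A$ is top, then $B$ is top.
   Context: For a group $H$, $H'$ denotes its commutator subgroup and $Z(H)$ its center. A finite group $G$ is weakly-top if $|H/H'| \leq |G/G'|$ for every proper subgroup $H<G$, and top if $|H/H'| < |G/G'|$ for every proper subgroup $H<G$. In every group $G$ the commutator map induces a well-defined surjective map $\theta_G : G/Z(G) \times G/Z(G) \to G'$, $(xZ(G),yZ(G)) \mapsto [x,y]=x^{-1}y^{-1}xy$. Two groups $A$ and $B$ are isoclinic (in the sense of P. Hall) if there exist isomorphisms $\phi : A' \to B'$ and $\psi : A/Z(A) \to B/Z(B)$ such that $\phi(\theta_A(u,v)) = \theta_B(\psi(u),\psi(v))$ for all $u,v \in A/Z(A)$. *)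

From mathcomp Require Import all_boot all_fingroup all_solvable.
Set Implicit Arguments. Unset Strict Implicit. Unset Printing Implicit Defensive.
Import GroupScope.
Local Open Scope group_scope.

Definition weakly_top (gT : finGroupType) (G : {group gT}) : Prop :=
  forall H : {group gT}, H \proper G -> #|H / H^`(1)| <= #|G / G^`(1)|.

Definition top (gT : finGroupType) (G : {group gT}) : Prop :=
  forall H : {group gT}, H \proper G -> #|H / H^`(1)| < #|G / G^`(1)|.

(* Isoclinism in the sense of P. Hall: isomorphisms phi : A' -> B' and
   psi : A/Z(A) -> B/Z(B) such that phi(theta_A(u,v)) = theta_B(psi u, psi v),
   where theta_A(xZ, yZ) = [x, y] = x^-1 y^-1 x y (MathComp's [~ x, y]).
   The compatibility is stated on representatives. *)
Definition isoclinic (gT rT : finGroupType) (A : {group gT}) (B : {group rT}) : Prop :=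
  exists (phi : {morphism A^`(1) >-> rT})
         (psi : {morphism A / 'Z(A) >-> coset_of 'Z(B)}),
    [/\ isom (A^`(1)) (B^`(1)) phi,
        isom (A / 'Z(A)) (B / 'Z(B)) psi &
        forall x y x' y', x \in A -> y \in A -> x' \in B -> y' \in B ->
          coset 'Z(B) x' = psi (coset 'Z(A) x) ->
          coset 'Z(B) y' = psi (coset 'Z(A) y) ->
          phi [~ x, y] = [~ x', y']].

From mathcomp Require Import all_boot all_fingroup all_solvable.
Set Implicit Arguments. Unset Strict Implicit. Unset Printing Implicit Defensive.

(* Enlarging a subgroup H < G to H Z(G) does not change H' and can only
   increase |H/H'| = |H|/|H'|, so both properties need only be tested on the
   subgroups containing the centre.  For Z(G) <= H <= G, comparing |H/H'| with
   |G/G'| amounts to comparing |H/Z(G)| |G'| with |G/Z(G)| |H'|.  An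
   isoclinism A ~ B matches the subgroups of A above Z(A) with those of B above
   Z(B) through psi, and phi maps the derived subgroup of each onto that of its
   partner, so all four numbers agree on both sides. *)

Lemma leq_ratio x1 x2 y1 y2 d1 d2 z :
    0 < d1 -> 0 < d2 -> 0 < z -> x1 * d1 = y1 * z -> x2 * d2 = y2 * z ->
  (x1 <= x2) = (y1 * d2 <= y2 * d1).
Proof.
move=> d1_gt0 d2_gt0 z_gt0 def1 def2.
rewrite -(@leq_pmul2r (d1 * d2)) ?muln_gt0 ?d1_gt0 // mulnA def1.
rewrite [d1 * d2]mulnC mulnA def2 -!mulnA (mulnCA y1) (mulnCA y2).
by rewrite leq_pmul2l.
Qed.

Lemma ltn_ratio x1 x2 y1 y2 d1 d2 z :
    0 < d1 -> 0 < d2 -> 0 < z -> x1 * d1 = y1 * z -> x2 * d2 = y2 * z ->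
  (x1 < x2) = (y1 * d2 < y2 * d1).
Proof.
move=> d1_gt0 d2_gt0 z_gt0 def1 def2.
by rewrite !ltnNge (leq_ratio d2_gt0 d1_gt0 z_gt0 def2 def1).
Qed.

Import GroupScope.

Section Abelianization.

Variable gT : finGroupType.
Implicit Types G H K : {group gT}.

Lemma card_quotient_der H : (#|H / H^`(1)| * #|H^`(1)|)%N = #|H|.
Proof. by rewrite card_quotient ?der_norm // mulnC Lagrange ?der_sub. Qed.

Lemma card_quotient_center G H :
  'Z(G) \subset H -> H \subset G -> (#|H / 'Z(G)| * #|'Z(G)|)%N = #|H|.
Proof.
move=> sZH sHG.
rewrite card_quotient ?(subset_trans sHG) ?normal_norm ?center_normal //.
by rewrite mulnC Lagrange.
Qed.

Lemma leq_card_abelianization_center G H :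
    'Z(G) \subset H -> H \subset G ->
  (#|H / H^`(1)| <= #|G / G^`(1)|)
    = (#|H / 'Z(G)| * #|G^`(1)| <= #|G / 'Z(G)| * #|H^`(1)|)%N.
Proof.
move=> sZH sHG.
by apply: (leq_ratio (z := #|'Z(G)|));
  rewrite ?cardG_gt0 ?card_quotient_der ?card_quotient_center ?center_sub.
Qed.

Lemma ltn_card_abelianization_center G H :
    'Z(G) \subset H -> H \subset G ->
  (#|H / H^`(1)| < #|G / G^`(1)|)
    = (#|H / 'Z(G)| * #|G^`(1)| < #|G / 'Z(G)| * #|H^`(1)|)%N.
Proof.
move=> sZH sHG.
by apply: (ltn_ratio (z := #|'Z(G)|));
  rewrite ?cardG_gt0 ?card_quotient_der ?card_quotient_center ?center_sub.
Qed.

Lemma der_joing_center G H : H \subset G -> (H <*> 'Z(G))^`(1) = H^`(1).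
Proof.
move=> sHG.
have cHZ : 'Z(G) \subset 'C(H) by rewrite (subset_trans (subsetIr _ _)) ?centS.
have := der_cprod 1 (cprodEY cHZ).
by rewrite (derG1P (center_abelian G)) cprodg1.
Qed.

Lemma leq_card_abelianization_der H K :
  H \subset K -> K^`(1) = H^`(1) -> #|H / H^`(1)| <= #|K / K^`(1)|.
Proof.
move=> sHK eHK; rewrite !card_quotient ?der_norm //= eHK.
have sH'K := subset_trans (der_sub 1 H) sHK.
by rewrite -(leq_pmul2l (cardG_gt0 H^`(1))) !Lagrange ?der_sub ?subset_leq_card.
Qed.

Lemma ltn_card_abelianization_der H K :
  H \proper K -> K^`(1) = H^`(1) -> #|H / H^`(1)| < #|K / K^`(1)|.
Proof.
move=> pHK eHK; rewrite !card_quotient ?der_norm //= eHK.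
have sH'K := subset_trans (der_sub 1 H) (proper_sub pHK).
by rewrite -(ltn_pmul2l (cardG_gt0 H^`(1))) !Lagrange ?der_sub ?proper_card.
Qed.

Lemma abelianization_proper_cases G H :
    H \proper G ->
  #|H / H^`(1)| < #|G / G^`(1)|
  \/ exists2 K : {group gT}, (K \proper G) && ('Z(G) \subset K)
       & #|H / H^`(1)| <= #|K / K^`(1)|.
Proof.
move=> pHG; have sHG := proper_sub pHG.
have eHZ := der_joing_center sHG.
have sKG : H <*> 'Z(G) \subset G by rewrite join_subG sHG center_sub.
have [eKG | pKG] := eqVproper sKG.
  by left; apply: ltn_card_abelianization_der pHG _; rewrite -{1}eKG.
right; exists (H <*> 'Z(G))%G; first by rewrite pKG joing_subr.
exact: leq_card_abelianization_der (joing_subl _ _) eHZ.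
Qed.

Lemma weakly_top_center G :
    (forall H, H \proper G -> 'Z(G) \subset H ->
       #|H / H^`(1)| <= #|G / G^`(1)|) ->
  weakly_top G.
Proof.
move=> topZ H /abelianization_proper_cases[/ltnW // | [K /andP[pKG sZK] leHK]].
exact: leq_trans leHK (topZ K pKG sZK).
Qed.

Lemma top_center G :
    (forall H, H \proper G -> 'Z(G) \subset H ->
       #|H / H^`(1)| < #|G / G^`(1)|) ->
  top G.
Proof.
move=> topZ H /abelianization_proper_cases[// | [K /andP[pKG sZK] leHK]].
exact: leq_ltn_trans leHK (topZ K pKG sZK).
Qed.

End Abelianization.

Section Isoclinism.

Variables (gT rT : finGroupType) (A : {group gT}) (B : {group rT}).
Variables (phi : {morphism A^`(1) >-> rT})
          (psi : {morphism A / 'Z(A) >-> coset_of 'Z(B)}).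
Hypotheses (phi_isom : isom A^`(1) B^`(1) phi)
           (psi_isom : isom (A / 'Z(A)) (B / 'Z(B)) psi).
Hypothesis phi_commg : forall x y x' y',
  x \in A -> y \in A -> x' \in B -> y' \in B ->
  coset 'Z(B) x' = psi (coset 'Z(A) x) -> coset 'Z(B) y' = psi (coset 'Z(A) y) ->
  phi [~ x, y] = [~ x', y'].

Section MatchedSubgroups.

Variables (H : {group gT}) (K : {group rT}).
Hypotheses (sHA : H \subset A) (sKB : K \subset B).
Hypothesis psiHK : psi @* (H / 'Z(A)) = K / 'Z(B).

Lemma matched_coset_lift x :
  x \in H -> exists2 x', x' \in K & coset 'Z(B) x' = psi (coset 'Z(A) x).
Proof.
move=> xH; have xA := subsetP sHA x xH.
have : psi (coset 'Z(A) x) \in K / 'Z(B).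
  by rewrite -psiHK mem_morphim ?mem_quotient.
by case/morphimP=> x' _ x'K ->; exists x'.
Qed.

Lemma matched_coset_descend x' :
  x' \in K -> exists2 x, x \in H & coset 'Z(B) x' = psi (coset 'Z(A) x).
Proof.
move=> x'K; have : coset 'Z(B) x' \in psi @* (H / 'Z(A)).
  by rewrite psiHK mem_quotient.
by case/morphimP=> _ _ /morphimP[x _ xH ->] ->; exists x.
Qed.

Lemma morphim_der_matched : phi @* H^`(1) = K^`(1).
Proof.
have sHA' : commg_set H H \subset A^`(1).
  apply/subsetP=> _ /imset2P[x y xH yH ->].
  by rewrite derg1 mem_commg ?(subsetP sHA).
rewrite [H^`(1)]derg1 [K^`(1)]derg1 /commutator morphim_gen //; congr <<_>>.
apply/eqP; rewrite eqEsubset; apply/andP; split; apply/subsetP.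
  move=> _ /morphimP[_ _ /imset2P[x y xH yH ->] ->].
  have [x' x'K xx'] := matched_coset_lift xH.
  have [y' y'K yy'] := matched_coset_lift yH.
  by rewrite (phi_commg _ _ _ _ xx' yy') ?imset2_f ?(subsetP sHA) ?(subsetP sKB).
move=> _ /imset2P[x' y' x'K y'K ->].
have [x xH xx'] := matched_coset_descend x'K.
have [y yH yy'] := matched_coset_descend y'K.
rewrite -(phi_commg _ _ _ _ xx' yy') ?(subsetP sHA) ?(subsetP sKB) //.
by rewrite mem_morphim ?imset2_f // (subsetP sHA') ?imset2_f.
Qed.

Lemma card_matched_der : #|H^`(1)| = #|K^`(1)|.
Proof.
by rewrite -morphim_der_matched card_injm ?(isom_inj phi_isom) ?dergS.
Qed.

Lemma card_matched_quotient_center : #|H / 'Z(A)| = #|K / 'Z(B)|.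
Proof.
by rewrite -psiHK (card_injm (isom_inj psi_isom)) ?quotientS.
Qed.

Lemma leq_card_abelianization_matched :
    'Z(A) \subset H -> 'Z(B) \subset K ->
  (#|H / H^`(1)| <= #|A / A^`(1)|) = (#|K / K^`(1)| <= #|B / B^`(1)|).
Proof.
move=> sZH sZK; rewrite !leq_card_abelianization_center //.
by rewrite card_matched_der card_matched_quotient_center (isom_card phi_isom)
           (isom_card psi_isom).
Qed.

Lemma ltn_card_abelianization_matched :
    'Z(A) \subset H -> 'Z(B) \subset K ->
  (#|H / H^`(1)| < #|A / A^`(1)|) = (#|K / K^`(1)| < #|B / B^`(1)|).
Proof.
move=> sZH sZK; rewrite !ltn_card_abelianization_center //.
by rewrite card_matched_der card_matched_quotient_center (isom_card phi_isom)
           (isom_card psi_isom).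
Qed.

End MatchedSubgroups.

Lemma exists_proper_matched (K : {group rT}) :
    K \proper B -> 'Z(B) \subset K ->
  exists H : {group gT},
    [/\ H \proper A, 'Z(A) \subset H & psi @* (H / 'Z(A)) = K / 'Z(B)].
Proof.
move=> pKB sZK; have sKB := proper_sub pKB.
have [injpsi impsi] := isomP psi_isom.
pose H := (coset 'Z(A) @*^-1 (psi @*^-1 (K / 'Z(B))))%G.
have psiHK : psi @* (H / 'Z(A)) = K / 'Z(B).
  by rewrite cosetpreK morphpreK // impsi quotientS.
have sHA : H \subset A.
  by rewrite sub_cosetpre_quo ?center_normal // morphpre_sub.
exists H; split=> //; last by rewrite -{1}(ker_coset 'Z(A)) ker_sub_pre.
rewrite properE sHA /=; apply: contra (proper_subn pKB) => sAH.
rewrite -(quotientSGK (normal_norm (center_normal B)) sZK) -impsi -psiHK.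
by rewrite morphimS ?quotientS.
Qed.

Lemma isoclinic_weakly_top : weakly_top A -> weakly_top B.
Proof.
move=> topA; apply: weakly_top_center => K pKB sZK.
have [H [pHA sZH psiHK]] := exists_proper_matched pKB sZK.
rewrite -(leq_card_abelianization_matched (proper_sub pHA) (proper_sub pKB)) //.
exact: topA.
Qed.

Lemma isoclinic_top : top A -> top B.
Proof.
move=> topA; apply: top_center => K pKB sZK.
have [H [pHA sZH psiHK]] := exists_proper_matched pKB sZK.
rewrite -(ltn_card_abelianization_matched (proper_sub pHA) (proper_sub pKB)) //.
exact: topA.
Qed.

End Isoclinism.

Theorem theorem1p3 (gT rT : finGroupType) (A : {group gT}) (B : {group rT}) :
  isoclinic A B ->
  (weakly_top A -> weakly_top B) /\ (top A -> top B).
Proof.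
case=> phi [psi [phi_isom psi_isom phi_commg]].
split; first exact: isoclinic_weakly_top phi_isom psi_isom phi_commg.
exact: isoclinic_top phi_isom psi_isom phi_commg.
Qed.
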